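(* Let $f$ be in Model-2 (defined below) and assume $Z_\pm\in\mathbb{R}$. Then $\beta_2^{\min}\le 0\le\min\{Y_-,R_0,\lambda\}\le\beta_2^{\max}\le\beta_2^{hi}$. If moreover $Y_-\le R_0\le Z_+$, $Y_-\le\lambda\le Z_+$ and $Z_+>0$, then $[0,Y_-]\subset\mathcal{B}_f^-$ and $[\beta_1^{lo},Z_+]=\mathcal{B}_f^+$; hence $f$ is admissible.
   Context: Model-2: $f(X,I)=\sum_{i,j=0}^2f_{ij}X^iI^j$ with real coefficients satisfying $f_{20}=f_{22}=0$, $f_{21}=-\kappa<0$, $f_{02}\le0$, $f_{10}\le0$, $f_{11}+f_{12}\le0$, $f_{00}\ge0$, $\lambda:=f_{00}+f_{01}+f_{02}\ge0$, and $f_{12}=-\kappa Y_-$ where $Y_-:=\frac12\big(-(f_{11}+f_{12})-\sqrt{(f_{11}+f_{12})^2+4f_{02}}\big)$ is real. Thus $f=f_0(I)+f_1(I)X+f_2(I)X^2$ with $f_0=f_{00}+f_{01}I+f_{02}I^2$, $f_1=f_{10}+f_{11}I+f_{12}I^2$, $f_2=f_{21}I$. Put $P_f(I):=(f_0(I)-\lambda I)/(1-I)=f_{00}-f_{02}I$, $h_f(z,I):=P_f(I)+zf_1(I)+z^2(I+(1-I)f_2(I))$, $\mathcal{B}_f^+:=\{z\ge\lambda:h_f(z,I)\le0\ \forall I\in[0,1]\}$, $\mathcal{B}_f^-:=\{z\le\lambda:h_f(z,I)\ge0\ \forall I\in[0,1]\}$. A pair $(\beta_1,\beta_2)$, $\beta_1>\beta_2$,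 is $f$-compatible if $\beta_2\le\lambda\le\beta_1$ and $h_f(\beta_i,I)/(\beta_j-\beta_i)\ge0$ for all $I\in[0,1]$, $\{i,j\}=\{1,2\}$; $f$ is admissible if such a pair exists. $R_0:=-f_{00}/f_{10}$ (undefined if $f_{10}=0$), $Z_\pm:=\frac12\big(-(f_{10}+f_{11}+f_{12})\pm\sqrt{(f_{10}+f_{11}+f_{12})^2+4(f_{02}-f_{00})}\big)$, $\beta_1^{lo}:=\max\{\lambda,R_0,Z_-\}$, $\beta_2^{hi}:=\min\{\lambda,R_0,Z_-\}$. For $s\in\{+,-,0\}$ let $\mathcal{I}_s:=\{I\in[0,1]:\operatorname{sign}(I+(1-I)f_2(I))=s\}$ and $Z_-(I)\le Z_+(I)$ the zeros of $h_f(\cdot,I)$; $\mathcal{Z}_-:=\{Z_-(I):I\in\mathcal{I}_-\}$, $\mathcal{Z}_0:=\{Z_-(I):I\in\mathcal{I}_+\}\cup\{Z_+(I):I\in\mathcal{I}_-\}\cup\{-P_f(I)/f_1(I):I\in\mathcal{I}_0,f_1(I)<0\}$; $\beta_2^{\max}:=\inf(\{\lambda\}\cup\mathcal{Z}_0)$, $\beta_2^{\min}:=\sup\mathcal{Z}_-$ if $\mathcal{Z}_-\ne\emptyset$, else $-\infty$. *)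

From HB Require Import structures.
From mathcomp Require Import all_boot all_order all_algebra.
From mathcomp Require Import all_classical all_reals all_analysis.
Set Implicit Arguments. Unset Strict Implicit. Unset Printing Implicit Defensive.
Import Order.TTheory GRing.Theory Num.Theory.
Local Open Scope classical_set_scope.
Local Open Scope ring_scope.

Section Model2.
Variable R : realType.
(* c i j is the coefficient f_{ij} of f(X,I) = sum_{i,j=0}^2 f_ij X^i I^j *)
Variable c : nat -> nat -> R.

Definition fk (k : nat) (I : R) : R := c k 0 + c k 1 * I + c k 2 * I ^+ 2.
Definition lam : R := c 0 0 + c 0 1 + c 0 2.
Definition kappa : R := - c 2 1.
Definition Ym : R :=
  (- (c 1 1 + c 1 2) - Num.sqrt ((c 1 1 + c 1 2) ^+ 2 + 4 * c 0 2)) / 2.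
Definition Pf (I : R) : R := c 0 0 - c 0 2 * I.
Definition qf (I : R) : R := I + (1 - I) * fk 2 I.
Definition hf (z I : R) : R := Pf I + z * fk 1 I + z ^+ 2 * qf I.

Definition Bplus : set R := [set z | lam <= z /\ forall I, 0 <= I <= 1 -> hf z I <= 0].
Definition Bminus : set R := [set z | z <= lam /\ forall I, 0 <= I <= 1 -> 0 <= hf z I].

Definition compatible (b1 b2 : R) : Prop :=
  b2 < b1 /\ b2 <= lam <= b1 /\
  (forall I, 0 <= I <= 1 -> 0 <= hf b1 I / (b2 - b1)) /\
  (forall I, 0 <= I <= 1 -> 0 <= hf b2 I / (b1 - b2)).
Definition admissible : Prop := exists b1 b2, compatible b1 b2.

Definition R0f : R := - c 0 0 / c 1 0.
Definition Zdisc : R := (c 1 0 + c 1 1 + c 1 2) ^+ 2 + 4 * (c 0 2 - c 0 0).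
Definition Zpl : R := (- (c 1 0 + c 1 1 + c 1 2) + Num.sqrt Zdisc) / 2.
Definition Zmi : R := (- (c 1 0 + c 1 1 + c 1 2) - Num.sqrt Zdisc) / 2.
Definition beta1lo : R := Num.max lam (Num.max R0f Zmi).
Definition beta2hi : R := Num.min lam (Num.min R0f Zmi).

Definition Iplus : set R := [set I | 0 <= I <= 1 /\ 0 < qf I].
Definition Iminus : set R := [set I | 0 <= I <= 1 /\ qf I < 0].
Definition Izero : set R := [set I | 0 <= I <= 1 /\ qf I = 0].

Definition is_Zminus_at (I z : R) : Prop :=
  hf z I = 0 /\ forall w, hf w I = 0 -> z <= w.
Definition is_Zplus_at (I z : R) : Prop :=
  hf z I = 0 /\ forall w, hf w I = 0 -> w <= z.

Definition calZm : set R := [set z | exists2 I, Iminus I & is_Zminus_at I z].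
Definition calZ0 : set R :=
  [set z | (exists2 I, Iplus I & is_Zminus_at I z)
        \/ (exists2 I, Iminus I & is_Zplus_at I z)
        \/ (exists2 I, Izero I & fk 1 I < 0 /\ z = - Pf I / fk 1 I)].

(* beta_2^max = inf ({lam} u Z_0), beta_2^min = sup Z_- (= -oo if Z_- empty) *)
Definition beta2max : \bar R :=
  ereal_inf [set x | x = lam%:E \/ exists2 z, calZ0 z & x = z%:E].
Definition beta2min : \bar R := ereal_sup [set x | exists2 z, calZm z & x = z%:E].

Definition model2 : Prop :=
  c 2 0 = 0 /\ c 2 2 = 0 /\ c 2 1 < 0 /\ c 0 2 <= 0 /\ c 1 0 <= 0 /\
  c 1 1 + c 1 2 <= 0 /\ 0 <= c 0 0 /\ 0 <= lam /\
  0 <= (c 1 1 + c 1 2) ^+ 2 + 4 * c 0 2 /\ c 1 2 = - kappa * Ym.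
End Model2.

From HB Require Import structures.
From mathcomp Require Import all_boot all_order all_algebra.
From mathcomp Require Import all_classical all_reals all_analysis.
From mathcomp Require Import ring lra.
Import Order.TTheory GRing.Theory Num.Theory.
Local Open Scope classical_set_scope.
Local Open Scope ring_scope.

(** In Model-2, with [Y_+ := -(f11 + f12) - Y_-] the other root of
    [Y^2 + (f11 + f12) Y - f02], the polynomial [h_f] factors as
      [h_f(z,I) = f00 + f10 z + I (z - Y_-) (z - Y_+ - kappa z (1 - I))]
    and interpolates its two boundary slices,
      [h_f(z,I) = (1 - I) h_f(z,0) + I h_f(z,1) - kappa z (z - Y_-) I (1 - I)],
    where [h_f(.,0)] is linear with root [R_0] and [h_f(.,1)] is the monic
    quadratic with roots [Z_-] and [Z_+].  By the factorisation [h_f(z,I) > 0]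
    whenever [z < min(Y_-, R_0)] and either [z >= 0] or the leading
    coefficient is positive, so no point of [Z_0] lies below [min(Y_-, R_0)],
    while [R_0] (at [I = 0]) and [Z_-] (at [I = 1]) belong to [Z_0].  A
    concave quadratic with nonnegative constant term has roots of opposite
    signs, which bounds [Z_-] by [0].  On [[beta_1^lo, Z_+]] all three terms of
    the interpolation are nonpositive, and conversely the slices [I = 0, 1]
    confine [B_f^+] to that interval. *)

Section ConcaveQuadratic.
Context {R : realFieldType} {A B C : R}.
Hypotheses (A_lt0 : A < 0) (C_ge0 : 0 <= C).

Let root z := C + z * B + z ^+ 2 * A = 0.

(* Vieta: the two roots sum to [-B/A] and multiply to [C/A <= 0]. *)
Let root_conj {z} : root z -> root (- B / A - z) /\ z * (- B / A - z) <= 0.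
Proof.
rewrite /root => rz; have A_neq0 : A != 0 by rewrite lt_eqF.
have C_eq : C = - (z * B + z ^+ 2 * A) by lra.
split; first by rewrite C_eq; field.
have -> : z * (- B / A - z) = C / A by rewrite C_eq; field.
by rewrite ler_ndivrMr // mul0r.
Qed.

Lemma concave_min_root_le0 z :
  root z -> (forall w, root w -> z <= w) -> z <= 0.
Proof.
move=> rz zmin; have [rw zw] := root_conj rz; have z_le_w := zmin _ rw.
rewrite leNgt; apply/negP => z_gt0; nra.
Qed.

Lemma concave_max_root_ge0 z :
  root z -> (forall w, root w -> w <= z) -> 0 <= z.
Proof.
move=> rz zmax; have [rw zw] := root_conj rz; have w_le_z := zmax _ rw.
rewrite leNgt; apply/negP => z_lt0; nra.
Qed.

End ConcaveQuadratic.

Section Model2.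
Context {R : realType} {c : nat -> nat -> R}.

Lemma Zmi_le_Zpl : Zmi c <= Zpl c.
Proof. by rewrite /Zmi /Zpl; have := sqrtr_ge0 (Zdisc c); lra. Qed.

Lemma compatible_of_Bplus_Bminus b1 b2 :
  Bplus c b1 -> Bminus c b2 -> b2 < b1 -> compatible c b1 b2.
Proof.
move=> [lam_b1 hb1] [b2_lam hb2] b21; split=> //; split; first by rewrite b2_lam.
split=> I hI.
- by apply: mulr_le0 (hb1 I hI) _; rewrite invr_le0 subr_le0 ltW.
- by apply: divr_ge0 (hb2 I hI) _; rewrite subr_ge0 ltW.
Qed.

Hypothesis Hm : model2 c.

Let c20 : c 2 0 = 0. Proof. by case: Hm. Qed.
Let c22 : c 2 2 = 0. Proof. by case: Hm => _ []. Qed.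
Let kappa_gt0 : 0 < kappa c. Proof. by case: Hm => _ [_ [h _]]; rewrite oppr_gt0. Qed.
Let c02_le0 : c 0 2 <= 0. Proof. by case: Hm => _ [_ [_ [h _]]]. Qed.
Let c10_le0 : c 1 0 <= 0. Proof. by case: Hm => _ [_ [_ [_ [h _]]]]. Qed.
Let c00_ge0 : 0 <= c 0 0. Proof. by case: Hm => _ [_ [_ [_ [_ [_ [h _]]]]]]. Qed.
Let lam_ge0 : 0 <= lam c. Proof. by case: Hm => _ [_ [_ [_ [_ [_ [_ [h _]]]]]]]. Qed.
Let c12_eq : c 1 2 = - kappa c * Ym c.
Proof. by case: Hm => _ [_ [_ [_ [_ [_ [_ [_ [_ h]]]]]]]]. Qed.

Local Notation Yp := (- (c 1 1 + c 1 2) - Ym c).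

Lemma Ym_root_bounds : 0 <= Ym c <= Yp /\ Ym c ^+ 2 + (c 1 1 + c 1 2) * Ym c = c 0 2.
Proof.
case: Hm => _ [_ [_ [_ [_ [b_le0 [_ [_ [disc_ge0 _]]]]]]]]; have := c02_le0.
have := sqrtr_ge0 ((c 1 1 + c 1 2) ^+ 2 + 4 * c 0 2); have := sqr_sqrtr disc_ge0.
rewrite /Ym; set s := Num.sqrt _ => s2 s_ge0 c02_nonpos.
have : s <= - (c 1 1 + c 1 2) by nra.
split; [apply/andP; split|]; lra.
Qed.

Lemma hf_factor z I :
  hf c z I = c 0 0 + c 1 0 * z + I * (z - Ym c) * (z - Yp - kappa c * z * (1 - I)).
Proof.
have [_ Yroot] := Ym_root_bounds.
by rewrite /hf /Pf /qf /fk c20 c22 -Yroot c12_eq /kappa; ring.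
Qed.

Lemma hf_interp z I : hf c z I =
  (1 - I) * hf c z 0 + I * hf c z 1 - kappa c * z * (z - Ym c) * I * (1 - I).
Proof. by rewrite !hf_factor; ring. Qed.

Lemma hf_at0 z : hf c z 0 = c 0 0 + c 1 0 * z.
Proof. by rewrite hf_factor; ring. Qed.

Lemma qf_factor I : qf c I = I * (1 - kappa c * (1 - I)).
Proof. by rewrite /qf /fk /kappa c20 c22; ring. Qed.

Lemma Pf_ge0 {I} : 0 <= I -> 0 <= Pf c I.
Proof. by have := c00_ge0; have := c02_le0; rewrite /Pf; nra. Qed.

Hypothesis c10_neq0 : c 1 0 != 0.

Let c10_lt0 : c 1 0 < 0. Proof. by rewrite lt_neqAle c10_neq0. Qed.

Lemma hf_at0_R0f z : hf c z 0 = c 1 0 * (z - R0f c).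
Proof. by rewrite hf_at0 /R0f; field. Qed.

Lemma R0f_ge0 : 0 <= R0f c.
Proof. by apply: mulr_le0; rewrite ?oppr_le0 ?invr_le0. Qed.

Let hf_tail_ge0 {z I} : 0 <= I <= 1 -> z <= Ym c -> (z < 0 -> 0 < qf c I) ->
  0 <= I * (z - Ym c) * (z - Yp - kappa c * z * (1 - I)).
Proof.
move=> /andP[I_ge0 I_le1] zY qf_gt0.
have [/andP[Y_ge0 Y_le_Yp] _] := Ym_root_bounds.
have slope_le0 : z - Yp - kappa c * z * (1 - I) <= 0.
  case: (ltP z 0) => [z_lt0 | z_ge0].
  - have := qf_gt0 z_lt0; rewrite qf_factor => It_gt0.
    have t_gt0 : 0 < 1 - kappa c * (1 - I) by nra.
    nra.
  - have : 0 <= kappa c * z * (1 - I).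
      by rewrite !mulr_ge0 ?subr_ge0 // ltW.
    lra.
by apply: mulr_le0 slope_le0; rewrite mulr_ge0_le0 // subr_le0.
Qed.

Lemma hf_gt0_below {z I} : 0 <= I <= 1 -> z < Ym c -> z < R0f c ->
  (z < 0 -> 0 < qf c I) -> 0 < hf c z I.
Proof.
move=> hI zY zR0 qf_gt0; have := hf_tail_ge0 hI (ltW zY) qf_gt0.
have : 0 < c 0 0 + c 1 0 * z by rewrite -hf_at0 hf_at0_R0f nmulr_rgt0 // subr_lt0.
by rewrite hf_factor; lra.
Qed.

Lemma hf_ge0_below {z I} : 0 <= I <= 1 -> 0 <= z <= Ym c -> z <= R0f c ->
  0 <= hf c z I.
Proof.
move=> hI /andP[z_ge0 zY] zR0.
have /(hf_tail_ge0 hI zY) : z < 0 -> 0 < qf c I by rewrite ltNge z_ge0.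
have : 0 <= c 0 0 + c 1 0 * z by rewrite -hf_at0 hf_at0_R0f nmulr_rge0 // subr_le0.
by rewrite hf_factor; lra.
Qed.

Lemma calZ0_ge z : calZ0 c z -> Num.min (Ym c) (R0f c) <= z.
Proof.
rewrite leNgt lt_min => z_in; apply/negP => /andP[zY zR0].
case: z_in => [[I [hI q_gt0] [hz _]] | [[I [hI q_lt0] [hz zmax]] |
                [I [hI q0] [f1_lt0 ez]]]].
- by have := hf_gt0_below hI zY zR0 (fun=> q_gt0); rewrite hz ltxx.
- have z_ge0 : 0 <= z.
    case/andP: hI => I_ge0 _.
    exact: concave_max_root_ge0 q_lt0 (Pf_ge0 I_ge0) z hz zmax.
  have /(hf_gt0_below hI zY zR0) : z < 0 -> 0 < qf c I by rewrite ltNge z_ge0.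
  by rewrite hz ltxx.
- have z_ge0 : 0 <= z.
    case/andP: hI => I_ge0 _; rewrite ez; apply: mulr_le0.
      by rewrite oppr_le0 Pf_ge0.
    by rewrite invr_le0 ltW.
  have /(hf_gt0_below hI zY zR0) : z < 0 -> 0 < qf c I by rewrite ltNge z_ge0.
  suff -> : hf c z I = 0 by rewrite ltxx.
  by rewrite /hf q0 ez; field; rewrite lt_eqF.
Qed.

Lemma R0f_in_calZ0 : calZ0 c (R0f c).
Proof.
right; right; exists 0; first by split; rewrite ?lexx ?ler01 // qf_factor mul0r.
split; first by rewrite /fk expr2 !mulr0 !addr0.
by rewrite /R0f /Pf /fk expr2 !mulr0 !addr0 subr0.
Qed.

Lemma beta2min_le0 : (beta2min c <= 0%:E)%E.
Proof.
apply: ge_ereal_sup => _ [z [I [/andP[I_ge0 _] q_lt0] [hz zmin]] ->].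
by rewrite lee_fin; apply: concave_min_root_le0 q_lt0 (Pf_ge0 I_ge0) z hz zmin.
Qed.

Lemma min_Ym_R0f_lam_ge0 : 0 <= Num.min (Ym c) (Num.min (R0f c) (lam c)).
Proof. by have [/andP[Y_ge0 _] _] := Ym_root_bounds; rewrite !le_min Y_ge0 R0f_ge0. Qed.

Lemma min_Ym_R0f_lam_le_beta2max :
  ((Num.min (Ym c) (Num.min (R0f c) (lam c)))%:E <= beta2max c)%E.
Proof.
apply: le_ereal_inf_tmp => _ [-> | [z /calZ0_ge z_ge ->]]; rewrite lee_fin.
  by rewrite !ge_min lexx !orbT.
by apply: le_trans z_ge; rewrite le_min !ge_min !lexx /= orbT.
Qed.

Hypothesis Zdisc_ge0 : 0 <= Zdisc c.

Lemma hf_at1 z : hf c z 1 = (z - Zmi c) * (z - Zpl c).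
Proof.
have := sqr_sqrtr Zdisc_ge0; rewrite /hf /Pf /qf /fk /Zmi /Zpl /Zdisc.
set s := Num.sqrt _ => s2; lra.
Qed.

Lemma Zmi_in_calZ0 : calZ0 c (Zmi c).
Proof.
left; exists 1.
  by split; rewrite ?lexx ?ler01 // qf_factor subrr mulr0 subr0 mulr1.
rewrite /is_Zminus_at hf_at1 subrr mul0r; split=> // w.
rewrite hf_at1 => /eqP; rewrite mulf_eq0 !subr_eq0 => /orP[/eqP-> | /eqP->] //.
exact: Zmi_le_Zpl.
Qed.

Lemma beta2max_le_beta2hi : (beta2max c <= (beta2hi c)%:E)%E.
Proof.
rewrite /beta2hi !EFin_min !le_min; apply/and3P; split; apply: ereal_inf_lbound.
- by left.
- by right; exists (R0f c); first exact: R0f_in_calZ0.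
- by right; exists (Zmi c); first exact: Zmi_in_calZ0.
Qed.

Lemma itv0Ym_sub_Bminus : Ym c <= R0f c -> Ym c <= lam c ->
  [set z | 0 <= z <= Ym c] `<=` Bminus c.
Proof.
move=> Y_le_R0 Y_le_lam z /= /andP[z_ge0 z_le_Y]; split; first exact: le_trans Y_le_lam.
by move=> I hI; apply: hf_ge0_below; rewrite ?z_ge0 //; apply: le_trans Y_le_R0.
Qed.

Lemma Bplus_eq : Ym c <= lam c -> [set z | beta1lo c <= z <= Zpl c] = Bplus c.
Proof.
move=> Y_le_lam; apply/seteqP; split=> z /=.
- rewrite /beta1lo !ge_max => /andP[/and3P[lam_z R0_z Zmi_z] z_Zpl].
  split=> // I /andP[I_ge0 I_le1].
  have h0 : (1 - I) * hf c z 0 <= 0.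
    by rewrite mulr_ge0_le0 ?subr_ge0 // hf_at0_R0f nmulr_rle0 // subr_ge0.
  have h1 : I * hf c z 1 <= 0.
    by rewrite mulr_ge0_le0 // hf_at1 mulr_ge0_le0 // ?subr_ge0 ?subr_le0.
  have [/andP[Y_ge0 _] _] := Ym_root_bounds.
  have Y_le_z := le_trans Y_le_lam lam_z; have z_ge0 := le_trans Y_ge0 Y_le_z.
  have corr : 0 <= kappa c * z * (z - Ym c) * I * (1 - I).
    by rewrite !mulr_ge0 ?subr_ge0 // ltW.
  by rewrite hf_interp; lra.
- case=> lam_z hz.
  have R0_z : R0f c <= z.
    by rewrite -subr_ge0 -(nmulr_rle0 _ c10_lt0) -hf_at0_R0f hz // lexx ler01.
  have h1 : (z - Zmi c) * (z - Zpl c) <= 0 by rewrite -hf_at1 hz // lexx ler01.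
  have := Zmi_le_Zpl; rewrite /beta1lo !ge_max lam_z R0_z /= => Zmi_le.
  apply/andP; split; nra.
Qed.

End Model2.

Theorem proposition5p8 (R : realType) (c : nat -> nat -> R) :
  model2 c ->
  c 1 0 != 0 ->
  0 <= Zdisc c ->
  ((beta2min c <= 0%:E)%E /\
   (0%:E <= (Num.min (Ym c) (Num.min (R0f c) (lam c)))%:E)%E /\
   ((Num.min (Ym c) (Num.min (R0f c) (lam c)))%:E <= beta2max c)%E /\
   (beta2max c <= (beta2hi c)%:E)%E) /\
  (Ym c <= R0f c <= Zpl c -> Ym c <= lam c <= Zpl c -> 0 < Zpl c ->
     [set z | 0 <= z <= Ym c] `<=` Bminus c /\
     [set z | beta1lo c <= z <= Zpl c] = Bplus c /\
     admissible c).
Proof.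
move=> Hm c10_neq0 Zdisc_ge0; split.
  split; first exact: beta2min_le0.
  split; first by rewrite lee_fin min_Ym_R0f_lam_ge0.
  split; [exact: min_Ym_R0f_lam_le_beta2max | exact: beta2max_le_beta2hi].
move=> /andP[Y_le_R0 R0_le_Zpl] /andP[Y_le_lam lam_le_Zpl] Zpl_gt0.
have Bminus_sup := itv0Ym_sub_Bminus Hm c10_neq0 Y_le_R0 Y_le_lam.
have Bplus_itv := Bplus_eq Hm c10_neq0 Zdisc_ge0 Y_le_lam.
split=> //; split=> //.
exists (Zpl c), 0; apply: compatible_of_Bplus_Bminus Zpl_gt0.
  by rewrite -Bplus_itv /= lexx andbT /beta1lo !ge_max lam_le_Zpl R0_le_Zpl Zmi_le_Zpl.
have [/andP[Y_ge0 _] _] := Ym_root_bounds Hm.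
by apply: Bminus_sup; rewrite /= lexx.
Qed.
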